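(* Let $G=(V,E)$ be a connected plane graph with positive edge weights $w_e>0$, $e\in E$, and let $p=(v_1,e_1,v_2,\ldots,v_{n+1})$ be a cut-path of $G$ with edge set $E(p)=\{e_1,\ldots,e_n\}$. Let $V_1^*,V_2^*$ be the two sets of bounded faces into which the cut-path divides the weak dual vertex set $V^*$ (so that $E(p)$ is exactly the set of edges of $G$ adjacent to a face in $V_1^*$ and a face in $V_2^*$), and let $N_{1,2}^*=|V_{1,2}^*|$. Then the algebraic connectivity $\lambda_2^*$ (second-smallest eigenvalue of the dual Laplacian $\mathbf{L}^*=\mathbf{D}^*-\mathbf{A}^*$) of the weak dual graph satisfies $$\lambda_2^*\le \frac{N_1^*+N_2^*}{N_1^*N_2^*}\sum_{e\in E(p)} w_e^{-1}.$$
   Context: The weak dual $G^*$ of a connected plane graph $G$ has as vertices the faces of $G$ excluding the outer face. Its weighted adjacency matrix has entries $A^*_{f,g}=\sum_{e \text{ shared by faces } f \text{ and } g} 1/w_e$ for faces $f\neq g$, and $\mathbf{D}^*$ is diagonal with $D^*_{f,f}=\sum_g A^*_{f,g}$; the dual Laplacian is $\mathbf{L}^*=\mathbf{D}^*-\mathbf{A}^*$, with eigenvalues $0=\lambda_1^*\le\lambda_2^*\le\cdots$. The outer boundary $\mathcal{B}$ of $G$ is the cyclic path of edges adjacent to the exterior face and the connecting vertices. A cut-path is a path $p=(v_1,e_1,\ldots,v_{n+1})$ in $G$ containing no edges of $\mathcal{B}$ such that either it is cyclic and contains at most one vertex of $\mathcal{B}$, or it is acyclic with $v_1,v_{n+1}\in\mathcal{B}$.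 Such a cut-path induces a decomposition $V^*=V_1^*\cup V_2^*$, $V_1^*\cap V_2^*=\emptyset$, into two connected sets of bounded faces whose separating edges are exactly $E(p)$. *)

(* Plane graphs are represented as combinatorial maps
   (rotation systems) of genus 0 with a distinguished outer face. *)
From HB Require Import structures.
From mathcomp Require Import all_boot all_order all_fingroup all_algebra.
From mathcomp Require Import reals.

Set Implicit Arguments.
Unset Strict Implicit.
Unset Printing Implicit Defensive.

Import Order.TTheory GRing.Theory Num.Theory.
Local Open Scope ring_scope.

Section PlaneMap.

Variable D : finType.          (* darts = oriented edge-sides *)
Variables (ed nx : {perm D}).   (* ed : edge involution, nx : rotation at vertices *)

(* face permutation phi = nx o ed (perm product is left-to-right) *)
Definition phi : {perm D} := (ed * nx)%g.

Definition vertex_of (d : D) : {set D} := porbit nx d.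
Definition edge_of (d : D) : {set D} := porbit ed d.
Definition face_of (d : D) : {set D} := porbit phi d.

Definition vertices : {set {set D}} := porbits nx.
Definition edges : {set {set D}} := porbits ed.
Definition faces : {set {set D}} := porbits phi.

Definition map_axiom : Prop := forall d, ed (ed d) = d /\ ed d != d.

Definition map_connected : Prop :=
  forall d d', connect [rel x y | (y == ed x) || (y == nx x)] d d'.

(* genus 0 (Euler's formula V - E + F = 2) *)
Definition planar_map : Prop := (#|vertices| + #|faces| = #|edges| + 2)%N.

Variable d0 : D.  (* a dart of the outer (exterior) face *)

Definition outer_face : {set D} := face_of d0.

Definition Vstar : {set {set D}} := faces :\ outer_face.

Definition boundary_edge (d : D) : bool := (d \in outer_face) || (ed d \in outer_face).

Definition boundary_vertex (v : {set D}) : bool :=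
  [exists d, boundary_edge d && (v == vertex_of d)].

Definition dual_adj (f g : {set D}) : bool :=
  (f != g) && [exists d, (d \in f) && (ed d \in g)].

Definition dual_connected_set (V : {set {set D}}) : Prop :=
  forall f g, f \in V -> g \in V ->
    connect [rel x y | [&& x \in V, y \in V & dual_adj x y]] f g.

(* A path given by its sequence of darts d1 :: ps; dart d goes from
   vertex_of d to vertex_of (ed d). *)
Definition path_verts (d1 : D) (ps : seq D) : seq {set D} :=
  [seq vertex_of x | x <- d1 :: ps] ++ [:: vertex_of (ed (last d1 ps))].

Definition is_walk (d1 : D) (ps : seq D) : bool :=
  path [rel x y | vertex_of (ed x) == vertex_of y] d1 ps.

Definition cut_path (d1 : D) (ps : seq D) : Prop :=
  let p := d1 :: ps in
  let vs := path_verts d1 ps in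
  [/\ is_walk d1 ps,
      uniq [seq edge_of x | x <- p],
      all (fun x => ~~ boundary_edge x) p &
      ([/\ vertex_of (ed (last d1 ps)) = vertex_of d1,
           uniq [seq vertex_of x | x <- p] &
           (#|[set v in vs | boundary_vertex v]| <= 1)%N]
       \/
       [/\ uniq vs, boundary_vertex (vertex_of d1) &
           boundary_vertex (vertex_of (ed (last d1 ps)))])].

Definition path_edges (p : seq D) : {set {set D}} := [set edge_of x | x in p].



Variable R : realType.
Variable w : D -> R.   (* weight of the edge containing the dart *)

Definition Nstar := #|Vstar|.

Definition face_at (i : 'I_Nstar) : {set D} := enum_val i.

Definition dual_adjacency : 'M[R]_Nstar :=
  \matrix_(i, j) (if i == j then 0
                  else \sum_(d | (d \in face_at i) && (ed d \in face_at j)) (w d)^-1).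

Definition dual_degree : 'M[R]_Nstar :=
  diag_mx (\row_i \sum_j dual_adjacency i j).

Definition dual_laplacian : 'M[R]_Nstar := dual_degree - dual_adjacency.

End PlaneMap.

Definition sorted_spectrum (R : realType) (n : nat) (M : 'M[R]_n) (s : seq R) : Prop :=
  sorted <=%R s /\ char_poly M = \prod_(x <- s) ('X - x%:P).

From HB Require Import structures.
From mathcomp Require Import all_boot all_order all_fingroup all_algebra.
From mathcomp Require Import reals complex.
From mathcomp Require Import ring.
Import Order.TTheory GRing.Theory Num.Theory.
Local Open Scope ring_scope.

Set Implicit Arguments.
Unset Strict Implicit.
Unset Printing Implicit Defensive.

(* Fiedler's test-vector argument.  Put y_F = N2 on the faces of V1 and
   y_F = -N1 on those of V2.  Then y is orthogonal to the constant vector, which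
   the symmetric matrix L* annihilates, and |y|^2 = N1 N2 (N1 + N2).  As L* is a
   weighted Laplacian, y^T L* y = sum over edges e between bounded faces F, G of
   w_e^-1 (y_F - y_G)^2, and by the separation property only the edges of E(p)
   contribute, each with (N1 + N2)^2.  The min-max bound
   lambda_2 |y|^2 <= y^T L* y, obtained from the complex spectral theorem,
   concludes. *)

Lemma sorted_nth1_le_perm_behead (T : eqType) (le : rel T) (x0 : T) (s t : seq T) :
  reflexive le -> transitive le -> sorted le s -> perm_eq s (nth x0 s 0 :: t) ->
  {in t, forall y, le (nth x0 s 1) y}.
Proof.
move=> le_refl le_tr; case: s => [_ /perm_size //|a s /= /path_sorted s_sorted].
rewrite perm_cons => /perm_mem eq_st y; rewrite -eq_st.
case: s s_sorted {eq_st} => [|b s] //= /(order_path_min le_tr) /allP b_le.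
by rewrite inE => /predU1P[->|/b_le].
Qed.

Lemma char_poly_similar (F : comNzRingType) n (P P' A : 'M[F]_n) :
  P' *m P = 1%:M -> char_poly (P' *m A *m P) = char_poly A.
Proof.
move=> P'P; rewrite /char_poly.
have -> : char_poly_mx (P' *m A *m P) =
    map_mx polyC P' *m char_poly_mx A *m map_mx polyC P.
  rewrite /char_poly_mx mulmxBr mulmxBl -!map_mxM mul_mx_scalar -scalemxAl.
  by rewrite -map_mxM P'P map_mx1 scalemx1.
by rewrite !det_mulmx mulrAC -det_mulmx -map_mxM P'P map_mx1 det1 mul1r.
Qed.

Local Open Scope sesquilinear_scope.

Section HermitianForms.
Variables (C : numClosedFieldType) (n : nat).

Lemma char_poly_normalmx (M : 'M[C]_n) : M \is normalmx ->
  char_poly M = \prod_i ('X - (spectral_diag M 0 i)%:P).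
Proof.
move=> /orthomx_spectralP {1}->; rewrite invmx_unitary ?spectral_unitarymx //.
rewrite char_poly_similar; last by rewrite -[_^t*]mul1mx mulmxKtV ?spectral_unitarymx.
rewrite char_poly_trig ?diag_mx_is_trig //.
by apply: eq_bigr => i _; rewrite mxE eqxx mulr1n.
Qed.

Lemma diag_form_ge (P : 'M[C]_n) (dg : 'rV[C]_n) (k : 'I_n) (c : C) (v : 'rV[C]_n) :
  P \is unitarymx -> (forall j, j != k -> c <= dg 0 j) -> (v *m P^t*) 0 k = 0 ->
  c * (v *m v^t*) 0 0 <= (v *m (P^t* *m diag_mx dg *m P) *m v^t*) 0 0.
Proof.
move=> P_unitary dg_ge vk; set y := v *m P^t*.
have -> : v *m (P^t* *m diag_mx dg *m P) *m v^t* = y *m diag_mx dg *m y^t*.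
  by rewrite /y trmx_mul map_mxM trmxCK !mulmxA.
have -> : v *m v^t* = y *m y^t*.
  by rewrite /y trmx_mul map_mxM trmxCK mulmxA mulmxKtV.
have {vk} : y 0 k = 0 := vk; clearbody y => yk.
rewrite mul_mx_diag !mxE mulr_sumr; apply: ler_sum => j _; rewrite !mxE.
have [->|jk] := eqVneq j k; first by rewrite yk !mul0r mulr0.
rewrite mulrAC mulrC; apply: ler_wpM2l; first exact: mul_conjC_ge0.
exact: dg_ge.
Qed.

Lemma form_combination (M : 'M[C]_n) (a b : C) (p q : 'rV[C]_n) :
  ((a *: p - b *: q) *m M *m (a *: p - b *: q)^t*) 0 0 =
  a * a^* * (p *m M *m p^t*) 0 0 - a * b^* * (p *m M *m q^t*) 0 0
  - b * a^* * (q *m M *m p^t*) 0 0 + b * b^* * (q *m M *m q^t*) 0 0.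
Proof.
have -> : (a *: p - b *: q)^t* = a^* *: p^t* - b^* *: q^t*.
  by apply/matrixP => i j; rewrite !mxE rmorphB !rmorphM.
rewrite !mulmxBl -?scalemxAl !mulmxBr -?scalemxAr -?scalemxAl !mxE.
ring.
Qed.

(* The two-dimensional case of the Courant-Fischer principle: some nonzero
   combination of [u] and [x] is annihilated by [l]. *)
Lemma rayleigh_ge_orthogonal_kernel (M : 'M[C]_n) (l : 'cV[C]_n) (c : C) (u x : 'rV[C]_n) :
  (forall v : 'rV_n, (v *m l) 0 0 = 0 -> c * (v *m v^t*) 0 0 <= (v *m M *m v^t*) 0 0) ->
  M^t* = M -> u *m M = 0 -> (x *m u^t*) 0 0 = 0 -> 0 < (u *m u^t*) 0 0 -> 0 < c ->
  c * (x *m x^t*) 0 0 <= (x *m M *m x^t*) 0 0.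
Proof.
move=> lower M_herm uM xu u_gt0 c_gt0.
have Mu : M *m u^t* = 0.
  by have := congr1 (fun A => A^t*) uM; rewrite trmx_mul map_mxM M_herm trmx0 map_mx0.
have ux : (u *m x^t*) 0 0 = 0.
  by rewrite -[u]trmxCK -map_mxM -trmx_mul 2!mxE xu rmorph0.
set c1 := (u *m l) 0 0; set c2 := (x *m l) 0 0.
have [c1_0|c1_neq0] := eqVneq c1 0.
  have := lower u c1_0; rewrite uM mul0mx [X in _ <= X]mxE.
  by rewrite lt_geF // mulr_gt0.
have := lower (c2 *: u - c1 *: x).
have -> : ((c2 *: u - c1 *: x) *m l) 0 0 = 0.
  by rewrite /c1 /c2 mulmxBl -!scalemxAl !mxE mulrC subrr.
move=> /(_ erefl).
have norm_v := form_combination 1%:M c2 c1 u x; rewrite !mulmx1 in norm_v.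
rewrite form_combination norm_v uM !mul0mx.
rewrite -(mulmxA x M) Mu mulmx0 ux xu [(0 : 'M[C]_1) 0 0]mxE !mulr0 !subr0 add0r mulrDr => le_c.
have c1c1_gt0 : 0 < c1 * c1^* by rewrite mul_conjC_gt0.
rewrite -(ler_pM2l c1c1_gt0) mulrCA; apply: le_trans _ le_c; rewrite lerDr.
exact: mulr_ge0 (ltW c_gt0) (mulr_ge0 (mul_conjC_ge0 _) (ltW u_gt0)).
Qed.

End HermitianForms.

Section RealSymmetric.
Variable R : rcfType.
Local Notation toC := (real_complex R).

Lemma map_complex_tr m n (A : 'M[R]_(m, n)) : (map_mx toC A)^t* = map_mx toC A^T.
Proof. by apply/matrixP => i j; rewrite !mxE conj_Creal // complex_real. Qed.

Lemma map_complex_dot n (a b : 'rV[R]_n) :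
  (map_mx toC a *m (map_mx toC b)^t*) 0 0 = toC ((a *m b^T) 0 0).
Proof. by rewrite map_complex_tr -map_mxM mxE. Qed.

Lemma map_complex_form n (a b : 'rV[R]_n) (M : 'M[R]_n) :
  (map_mx toC a *m map_mx toC M *m (map_mx toC b)^t*) 0 0 = toC ((a *m M *m b^T) 0 0).
Proof. by rewrite map_complex_tr -!map_mxM mxE. Qed.

Lemma map_complex_normalmx n (L : 'M[R]_n) : L^T = L -> map_mx toC L \is normalmx.
Proof. by move=> LT; apply/normalmxP; rewrite map_complex_tr LT. Qed.

Lemma spectral_diag_ge_nth1 n (L : 'M[R]_n) (s : seq R) :
  L^T = L -> sorted <=%R s -> char_poly L = \prod_(a <- s) ('X - a%:P) -> (1 < size s)%N ->
  exists k, forall j, j != k -> toC s`_1 <= spectral_diag (map_mx toC L) 0 j.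
Proof.
move=> LT s_sorted charL s_size; set dg := spectral_diag _.
have spectrum : perm_eq (map toC s) [seq dg 0 i | i <- enum 'I_n].
  apply: prod_XsubC_eq; rewrite [RHS]big_map enumT -char_poly_normalmx.
    by rewrite -map_char_poly charL map_prod_XsubC big_map.
  exact: map_complex_normalmx.
have [k _ dg_k] : exists2 k, k \in enum 'I_n & toC s`_0 = dg 0 k.
  by apply/mapP; rewrite -(perm_mem spectrum) map_f // mem_nth // ltnW.
exists k => j jk; rewrite -(nth_map 0 0 toC s_size).
apply: (sorted_nth1_le_perm_behead (t := [seq dg 0 i | i <- rem k (enum 'I_n)])).
- exact: lexx.
- exact: le_trans.
- by rewrite sorted_map; apply: sub_sorted s_sorted => a b; rewrite /= lecR.
- rewrite (nth_map 0) ?(ltnW s_size) // dg_k (perm_trans spectrum) //.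
  by rewrite (perm_map _ (perm_to_rem _)) // mem_enum.
- by apply: map_f; rewrite (rem_filter _ (enum_uniq _)) mem_filter inE jk mem_enum.
Qed.

Lemma second_eigenvalue_le_rayleigh n (L : 'M[R]_n) (s : seq R) (u x : 'rV[R]_n) :
  L^T = L -> u *m L = 0 -> sorted <=%R s -> char_poly L = \prod_(a <- s) ('X - a%:P) ->
  (x *m u^T) 0 0 = 0 -> 0 < (u *m u^T) 0 0 -> 0 < s`_1 ->
  s`_1 * (x *m x^T) 0 0 <= (x *m L *m x^T) 0 0.
Proof.
move=> LT uL s_sorted charL xu u_gt0 s1_gt0.
have s_size : (1 < size s)%N.
  by rewrite ltnNge; apply: contraTN s1_gt0 => /(nth_default 0) ->; rewrite ltxx.
have [k dg_ge] := spectral_diag_ge_nth1 LT s_sorted charL s_size.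
set Lc := map_mx toC L; set P := spectralmx Lc.
have P_unitary : P \is unitarymx := spectral_unitarymx Lc.
have Lc_diag : Lc = P^t* *m diag_mx (spectral_diag Lc) *m P.
  by rewrite -invmx_unitary //; apply/orthomx_spectralP/map_complex_normalmx.
(* [col k P^t*] is an eigenvector of [Lc] for the least eigenvalue [s`_0]. *)
have lower (v : 'rV_n) : (v *m col k (P^t*)) 0 0 = 0 ->
    toC s`_1 * (v *m v^t*) 0 0 <= (v *m Lc *m v^t*) 0 0.
  move=> vk; rewrite Lc_diag; apply: diag_form_ge P_unitary dg_ge _.
  by move: vk; rewrite colEsub mulmx_colsub mxE.
have Lc_herm : Lc^t* = Lc by rewrite map_complex_tr LT.
have uLc : map_mx toC u *m Lc = 0 by rewrite -map_mxM uL map_mx0.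
have xuC : (map_mx toC x *m (map_mx toC u)^t*) 0 0 = 0.
  by rewrite map_complex_dot xu rmorph0.
have uuC : 0 < (map_mx toC u *m (map_mx toC u)^t*) 0 0.
  by rewrite map_complex_dot -(rmorph0 toC) ltcR.
have s1C : 0 < toC s`_1 by rewrite -(rmorph0 toC) ltcR.
have := rayleigh_ge_orthogonal_kernel lower Lc_herm uLc xuC uuC s1C.
by rewrite map_complex_dot map_complex_form -rmorphM lecR.
Qed.

End RealSymmetric.

Local Close Scope sesquilinear_scope.

Section Laplacian.
Variables (R : comNzRingType) (n : nat).

Definition laplacian (A : 'M[R]_n) : 'M[R]_n := diag_mx (\row_i \sum_j A i j) - A.

Lemma laplacian_tr (A : 'M[R]_n) : A^T = A -> (laplacian A)^T = laplacian A.
Proof. by move=> AT; rewrite linearB /= tr_diag_mx AT. Qed.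

Lemma const_mul_laplacian (A : 'M[R]_n) : A^T = A -> (const_mx 1 : 'rV[R]_n) *m laplacian A = 0.
Proof.
move=> AT; apply/rowP => j; rewrite !mxE.
under eq_bigr => i _ do rewrite !mxE mul1r.
rewrite sumrB [X in X - _](bigD1 j) //= [X in _ + X - _]big1; last first.
  by move=> i /negbTE ij; rewrite ij mulr0n.
rewrite eqxx mulr1n addr0; apply/eqP; rewrite subr_eq0; apply/eqP.
by apply: eq_bigr => i _; rewrite -{1}AT mxE.
Qed.

Lemma laplacian_form (A : 'M[R]_n) (x : 'rV[R]_n) :
  (x *m laplacian A *m x^T) 0 0 = \sum_i \sum_j A i j * (x 0 i * (x 0 i - x 0 j)).
Proof.
rewrite mxE; under eq_bigr => j _ do rewrite !mxE mulr_suml.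
rewrite exchange_big /=; apply: eq_bigr => i _.
under eq_bigr => j _ do rewrite !mxE mulrBr mulrBl.
rewrite sumrB [X in X - _](bigD1 i) //= [X in _ + X - _]big1; last first.
  by move=> j /negbTE ji; rewrite eq_sym ji mulr0n mulr0 mul0r.
rewrite eqxx mulr1n addr0 mulr_sumr mulr_suml -sumrB.
by apply: eq_bigr => j _; ring.
Qed.

Lemma const_mx_dot : ((const_mx 1 : 'rV[R]_n) *m (const_mx 1 : 'rV[R]_n)^T) 0 0 = n%:R.
Proof.
by rewrite mxE (eq_bigr (fun=> 1)) => [|j _]; rewrite ?sumr_const ?card_ord // !mxE mulr1.
Qed.

End Laplacian.

Section CombinatorialMap.
Variables (D : finType) (ed nx : {perm D}).
Hypothesis ed_inv : map_axiom ed.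

Lemma mem_face (F : {set D}) d : F \in faces ed nx -> (d \in F) = (face_of ed nx d == F).
Proof. by case/imsetP => e _ ->; rewrite /face_of eq_porbit_mem. Qed.

Lemma mem_edge_of x d : (d \in edge_of ed x) = (d == x) || (d == ed x).
Proof.
have edK y : ed (ed y) = y := (ed_inv y).1.
apply/porbitP/idP => [[i ->]|/orP[] /eqP ->]; last 2 first.
- by exists 0%N; rewrite expg0 perm1.
- by exists 1%N; rewrite expg1.
elim: i => [|i]; first by rewrite expg0 perm1 eqxx.
by rewrite expgSr permM => /orP[] /eqP ->; rewrite ?edK eqxx ?orbT.
Qed.

Lemma sum_path_edges (V : nmodType) (p : seq D) (F : D -> V) :
  uniq [seq edge_of ed x | x <- p] ->
  \sum_(d | edge_of ed d \in path_edges ed p) F d = \sum_(x <- p) (F x + F (ed x)).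
Proof.
move=> uniq_p; rewrite (partition_big (edge_of ed) (mem (path_edges ed p))) //=.
rewrite (eq_bigl (mem [seq edge_of ed x | x <- p])) => [|E]; last first.
  by apply/imsetP/mapP => -[x xp ->]; exists x.
rewrite -big_uniq // big_map; apply: eq_big_seq => x xp.
rewrite (eq_bigl (mem [set x; ed x])) => [|d]; last first.
  rewrite /= !inE /edge_of eq_porbit_mem -/(edge_of ed x) mem_edge_of.
  have edx : porbit ed (ed x) = porbit ed x by have := porbit_perm ed 1 x; rewrite expg1.
  by apply/andb_idl => /orP[] /eqP ->; rewrite ?edx imset_f.
by rewrite big_setU1 ?big_set1 // inE eq_sym; exact: (ed_inv x).2.
Qed.

End CombinatorialMap.

Section DualLaplacian.
Variables (D : finType) (ed nx : {perm D}) (d0 : D) (R : realType) (w : D -> R).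
Hypotheses (ed_inv : map_axiom ed) (w_ed : forall d, w (ed d) = w d).

Local Notation face := (face_of ed nx).
Local Notation Vs := (Vstar ed nx d0).
Local Notation g := (@face_at D ed nx d0).
Local Notation L := (dual_laplacian ed nx d0 w).

Let edK d : ed (ed d) = d := (ed_inv d).1.

Definition inner_dart d := (face d \in Vs) && (face (ed d) \in Vs).

Lemma inner_dart_ed d : inner_dart (ed d) = inner_dart d.
Proof. by rewrite /inner_dart edK andbC. Qed.

Lemma dual_adjacency_tr : (dual_adjacency ed nx d0 w)^T = dual_adjacency ed nx d0 w.
Proof.
apply/matrixP => i j; rewrite !mxE eq_sym; case: eqP => // _.
rewrite (reindex_inj (@perm_inj _ ed)) /=.
by apply: eq_big => [d|d _]; rewrite ?edK ?w_ed // andbC.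
Qed.

Lemma dual_laplacianE : L = laplacian (dual_adjacency ed nx d0 w).
Proof. by []. Qed.

Lemma sum_face_at (G : {set D} -> R) : \sum_i G (g i) = \sum_(F in Vs) G F.
Proof. by rewrite [RHS](big_enum_val G). Qed.

Lemma sum_faces_containing d (G : {set D} -> R) :
  \sum_(F in Vs) (d \in F)%:R * G F = (face d \in Vs)%:R * G (face d).
Proof.
have faceE F : F \in Vs -> (d \in F) = (face d == F).
  by rewrite inE => /andP[_]; apply: mem_face.
have [dVs|dVs] := boolP (face d \in Vs); last first.
  rewrite mul0r big1 // => F FVs; rewrite faceE //.
  by case: eqP => [dF|_]; [rewrite dF FVs in dVs | rewrite mul0r].
rewrite (bigD1 (face d)) //= (faceE _ dVs) eqxx big1 ?addr0 // => F /andP[FVs Fd].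
by rewrite faceE // eq_sym (negbTE Fd) mul0r.
Qed.

Lemma dual_laplacian_form (y : {set D} -> R) (x := \row_i y (g i)) :
  (x *m L *m x^T) 0 0 =
  \sum_d (inner_dart d)%:R * ((w d)^-1 * (y (face d) * (y (face d) - y (face (ed d))))).
Proof.
pose H F G := y F * (y F - y G).
transitivity (\sum_i \sum_j \sum_d
    ((d \in g i) && (ed d \in g j))%:R * ((w d)^-1 * H (g i) (g j))).
  rewrite dual_laplacianE laplacian_form; apply: eq_bigr => i _; apply: eq_bigr => j _.
  rewrite !mxE; case: eqP => [->|_].
    by rewrite mul0r big1 // => d _; rewrite /H subrr !mulr0.
  rewrite mulr_suml big_mkcond; apply: eq_bigr => d _.
  by case: ifP; rewrite ?mul1r ?mul0r.
under eq_bigr => i _ do rewrite exchange_big.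
rewrite exchange_big; apply: eq_bigr => d _.
under eq_bigr => i _ do under eq_bigr => j _ do rewrite -mulnb natrM -mulrA.
under eq_bigr => i _ do rewrite -mulr_sumr
  (sum_face_at (fun G => (ed d \in G)%:R * ((w d)^-1 * H (g i) G))) sum_faces_containing mulrCA.
rewrite -mulr_sumr (sum_face_at (fun F => (d \in F)%:R * ((w d)^-1 * H F (face (ed d))))).
rewrite (sum_faces_containing d (fun F => (w d)^-1 * H F (face (ed d)))).
by rewrite /inner_dart -mulnb natrM mulrCA mulrA.
Qed.

Lemma dual_laplacian_form_sym (y : {set D} -> R) (x := \row_i y (g i)) :
  (x *m L *m x^T) 0 0 *+ 2 =
  \sum_d (inner_dart d)%:R * ((w d)^-1 * (y (face d) - y (face (ed d))) ^+ 2).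
Proof.
rewrite mulr2n dual_laplacian_form [X in X + _](reindex_inj (@perm_inj _ ed)).
rewrite -big_split /=; apply: eq_bigr => d _; rewrite inner_dart_ed edK w_ed; ring.
Qed.

End DualLaplacian.

Section Bipartition.
Variables (D : finType) (ed nx : {perm D}) (d0 : D) (R : realType) (w : D -> R).
Hypotheses (ed_inv : map_axiom ed) (w_ed : forall d, w (ed d) = w d).
Variables (V1 V2 : {set {set D}}).
Hypotheses (V12 : V1 :|: V2 = Vstar ed nx d0) (V12_disj : V1 :&: V2 = set0).

Local Notation face := (face_of ed nx).
Local Notation g := (@face_at D ed nx d0).
Local Notation L := (dual_laplacian ed nx d0 w).
Local Notation n1 := (#|V1|%:R : R).
Local Notation n2 := (#|V2|%:R : R).

Definition cut_vector (F : {set D}) : R := if F \in V1 then n2 else - n1.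

Local Notation x := (\row_i cut_vector (g i)).

Let V1_notin_V2 F : F \in V1 -> F \in V2 = false.
Proof. by move=> F1; apply/negP => F2; have := in_set0 F; rewrite -V12_disj inE F1 F2. Qed.

Lemma sum_cut_vector (G : R -> R) : \sum_i G (cut_vector (g i)) = G n2 * n1 + G (- n1) * n2.
Proof.
rewrite (sum_face_at ed nx d0 (G \o cut_vector)) -V12.
rewrite (eq_bigl [predU V1 & V2]) => [|F]; last by rewrite !inE.
rewrite bigU /=; last by rewrite -setI_eq0 V12_disj.
rewrite (eq_bigr (fun=> G n2)) => [|F F1]; last by rewrite /cut_vector F1.
rewrite [X in _ + X](eq_bigr (fun=> G (- n1))) => [|F F2]; last first.
  by rewrite /cut_vector; case: ifPn => // /V1_notin_V2; rewrite F2.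
by rewrite !sumr_const !mulr_natr.
Qed.

Lemma cut_vector_orth : (x *m (const_mx 1 : 'rV_(Nstar ed nx d0))^T) 0 0 = 0.
Proof.
rewrite mxE; under eq_bigr do rewrite !mxE mulr1.
by rewrite (sum_cut_vector id) /=; ring.
Qed.

Lemma cut_vector_norm : (x *m x^T) 0 0 = n1 * n2 * (n1 + n2).
Proof.
rewrite mxE; under eq_bigr do rewrite !mxE.
by rewrite (sum_cut_vector (fun a => a * a)) /=; ring.
Qed.

Variable p : seq D.
Hypothesis uniq_p : uniq [seq edge_of ed x | x <- p].
Hypothesis cut_sep : forall d,
  ((face d \in V1) && (face (ed d) \in V2)) || ((face d \in V2) && (face (ed d) \in V1))
  = (edge_of ed d \in path_edges ed p).

Lemma cut_vector_form : (x *m L *m x^T) 0 0 = (n1 + n2) ^+ 2 * \sum_(e <- p) (w e)^-1.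
Proof.
apply: (@mulIf _ 2%:R); first by rewrite pnatr_eq0.
rewrite !mulr_natr (dual_laplacian_form_sym nx d0 ed_inv w_ed).
transitivity (\sum_(d | edge_of ed d \in path_edges ed p) (n1 + n2) ^+ 2 * (w d)^-1).
  rewrite [RHS]big_mkcond; apply: eq_bigr => d _; rewrite -cut_sep /inner_dart -V12 !inE /cut_vector.
  case F1: (face d \in V1); case G1: (face (ed d) \in V1);
    rewrite ?(V1_notin_V2 F1) ?(V1_notin_V2 G1) /= ?andbF ?orbF ?subrr ?expr0n /= ?mulr0 ?if_same //.
  - by case: (face (ed d) \in V2); rewrite ?mul0r // mul1r; ring.
  - by case: (face d \in V2); rewrite ?mul0r // mul1r; ring.
rewrite -mulr_sumr (sum_path_edges ed_inv) // -mulrnAr -sumrMnl.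
by congr (_ * _); apply: eq_bigr => e _; rewrite w_ed mulr2n.
Qed.

Lemma card_sides_gt0 e : e \in p -> (0 < #|V1|)%N /\ (0 < #|V2|)%N.
Proof.
move=> ep; have := cut_sep e; rewrite imset_f // => /orP[] /andP[Fe Ge].
  by split; apply/card_gt0P; [exists (face e) | exists (face (ed e))].
by split; apply/card_gt0P; [exists (face (ed e)) | exists (face e)].
Qed.

End Bipartition.

Theorem corollary1 (D : finType) (ed nx : {perm D}) (d0 : D)
  (R : realType) (w : D -> R)
  (Hmap : map_axiom ed) (Hconn : map_connected ed nx) (Hplanar : planar_map ed nx)
  (Hwsym : forall d, w (ed d) = w d) (Hwpos : forall d, 0 < w d)
  (d1 : D) (ps : seq D) (Hcut : cut_path ed nx d0 d1 ps)
  (V1 V2 : {set {set D}})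
  (HV : V1 :|: V2 = Vstar ed nx d0) (HVdisj : V1 :&: V2 = set0)
  (HV1c : dual_connected_set ed V1) (HV2c : dual_connected_set ed V2)
  (Hsep : forall d, ((face_of ed nx d \in V1) && (face_of ed nx (ed d) \in V2))
                    || ((face_of ed nx d \in V2) && (face_of ed nx (ed d) \in V1))
                    = (edge_of ed d \in path_edges ed (d1 :: ps)))
  (s : seq R) (Hs : sorted_spectrum (dual_laplacian ed nx d0 w) s) :
  s`_1 <= (#|V1|%:R + #|V2|%:R) / (#|V1|%:R * #|V2|%:R)
          * \sum_(x <- d1 :: ps) (w x)^-1.
Proof.
have uniq_p : uniq [seq edge_of ed x | x <- d1 :: ps] by case: Hcut.
have [V1_gt0 V2_gt0] := card_sides_gt0 Hsep (mem_head d1 ps).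
set n1 : R := #|V1|%:R; set n2 : R := #|V2|%:R; set cut := \sum_(x <- _) _.
have n1_gt0 : 0 < n1 by rewrite ltr0n.
have n2_gt0 : 0 < n2 by rewrite ltr0n.
have [s1_le0|s1_gt0] := lerP s`_1 0.
  apply: le_trans s1_le0 _; rewrite mulr_ge0 ?divr_ge0 ?addr_ge0 ?mulr_ge0 ?ler0n //.
  by rewrite sumr_ge0 // => x _; rewrite invr_ge0 ltW.
pose u : 'rV[R]_(Nstar ed nx d0) := const_mx 1.
have u_gt0 : 0 < (u *m u^T) 0 0.
  rewrite /u const_mx_dot ltr0n /Nstar -HV.
  exact: leq_trans V1_gt0 (subset_leq_card (subsetUl _ _)).
have -> : (n1 + n2) / (n1 * n2) * cut = (n1 + n2) ^+ 2 * cut / (n1 * n2 * (n1 + n2)).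
  by field; rewrite ?gt_eqF ?addr_gt0.
rewrite ler_pdivlMr ?mulr_gt0 ?addr_gt0 //.
rewrite -(cut_vector_norm R HV HVdisj) -(cut_vector_form Hmap Hwsym HV HVdisj uniq_p Hsep).
have A_sym := dual_adjacency_tr nx d0 Hmap Hwsym.
exact: second_eigenvalue_le_rayleigh (laplacian_tr A_sym) (const_mul_laplacian A_sym)
  Hs.1 Hs.2 (cut_vector_orth R HV HVdisj) u_gt0 s1_gt0.
Qed.
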